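(* Let $K\ge3$. If for all $k\in[K]$ there is a function $g_k$ (defined on $[0,1]$) with $f_k({\bm{p}})=g_k\!\left(\frac{p_k}{|{\bm{p}}|}\right)$ for all ${\bm{p}}\in\mathbb{R}^K_{\ge0}\setminus\{\mathbf{0}\}$, then the Conservation Condition $$(f_1({\bm{p}}),\dots,f_K({\bm{p}}))=\nabla L^{\mathrm{same}}({\bm{p}})\quad\text{for all }{\bm{p}}\in\mathbb{R}^K_{\ge0}\setminus\{\mathbf{0}\}$$ holds if and only if all $g_k$ are constant functions.
   Context: Setting: distributions $\mathcal{D}_1,\dots,\mathcal{D}_K$ on $\mathcal{Z}$, a loss $\ell(h,{\bm{z}})$, $N\ge1$, and a learning algorithm $\mathcal{A}:\mathcal{Z}^N\to\mathcal{H}$. For ${\bm{q}}\in\Delta_K=\{{\bm{r}}\ge0:\sum_kr_k=1\}$ let $\mathcal{D}_{\bm{q}}=\sum_kq_k\mathcal{D}_k$ and $\bar e_k({\bm{q}})=\mathbb{E}_{S\sim\mathcal{D}_{\bm{q}}^N}\mathbb{E}_{{\bm{z}}\sim\mathcal{D}_k}[\ell(\mathcal{A}(S),{\bm{z}})]$. For ${\bm{p}}\in\mathbb{R}^K_{\ge0}\setminus\{\mathbf{0}\}$, $|{\bm{p}}|=\sum_kp_k$, $f_k({\bm{p}})=\bar e_k({\bm{p}}/|{\bm{p}}|)$ and $L^{\mathrm{same}}({\bm{p}})=\sum_kp_kf_k({\bm{p}})$. *)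

From HB Require Import structures.
From mathcomp Require Import all_boot all_order all_algebra.
From mathcomp Require Import all_classical all_reals all_analysis.
Set Implicit Arguments. Unset Strict Implicit. Unset Printing Implicit Defensive.
Import Order.TTheory GRing.Theory Num.Theory.
Import numFieldNormedType.Exports.
Local Open Scope classical_set_scope.
Local Open Scope ring_scope.

Section Setting.
Variables (R : realType) (d : measure_display) (Z : measurableType d).

(* nonnegative weight used in the mixture (on the simplex it is just q k) *)
Lemma nnw_ge0 (x : R) : 0 <= Num.max x 0.
Proof. by rewrite le_max lexx orbT. Qed.
Definition nnw (x : R) : {nonneg R} := @NngNum R (Num.max x 0) (nnw_ge0 x).

Definition mixture (K : nat) (q : 'I_K -> R)
    (D : 'I_K -> probability Z R) : {measure set Z -> \bar R} :=
  msum (fun n : nat => match insub n with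
                       | Some i => mscale (nnw (q i)) (D i)
                       | None => mzero
                       end) K.

(* expectation over  S ~ mu^n  (S an n-tuple of i.i.d. draws from mu),
   computed as the iterated integral  int mu(dz1) ... int mu(dzn) F(z1,...,zn) *)
Fixpoint iter_expect (mu : {measure set Z -> \bar R}) (n : nat) {struct n} :
    (n.-tuple Z -> \bar R) -> \bar R :=
  match n return (n.-tuple Z -> \bar R) -> \bar R with
  | 0 => fun F => F [tuple]
  | n'.+1 => fun F =>
      (\int[mu]_z @iter_expect mu n' (fun s : n'.-tuple Z => F [tuple of z :: s]))%E
  end.

Variables (H : Type) (K N : nat) (D : 'I_K -> probability Z R)
  (loss : H -> Z -> R) (A : N.-tuple Z -> H).

Definition ebar (k : 'I_K) (q : 'I_K -> R) : R :=
  fine (@iter_expect (mixture q D) N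
          (fun S => \int[D k]_z (loss (A S) z)%:E)%E).

Definition pnorm1 (p : 'I_K -> R) : R := \sum_(k < K) p k.

Definition dom (p : 'I_K -> R) : Prop := (forall k, 0 <= p k) /\ p <> (fun _ => 0).

Definition fk (k : 'I_K) (p : 'I_K -> R) : R := ebar k (fun j => p j / pnorm1 p).

Definition Lsame (p : 'I_K -> R) : R := \sum_(k < K) p k * fk k p.

Definition shift (p : 'I_K -> R) (k : 'I_K) (h : R) : 'I_K -> R :=
  fun j => if j == k then p j + h else p j.

(* the k-th partial derivative of F at p equals l, the limit being taken
   within the domain (one-sided at boundary points where p_k = 0) *)
Definition has_partial (F : ('I_K -> R) -> R) (p : 'I_K -> R) (k : 'I_K) (l : R) : Prop :=
  (fun h : R => (F (shift p k h) - F p) / h) @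
    within (fun h : R => dom (shift p k h)) (0 : R)^' --> l.

Definition conservation : Prop :=
  forall p, dom p -> forall k, has_partial Lsame p k (fk k p).

End Setting.

(* If every g_k is constant, L^same is linear with gradient (g_k)_k.
   Conversely fix three distinct coordinates i, j, l and write F(a, b, c) for
   L^same at the point with these coordinates (and 0 elsewhere).  Since
   dF/da = g_i(a / (a + b + c)) sees (b, c) only through b + c, the mean value
   theorem gives F(a, h, c) - F(a, 0, c + h) = F(0, h, c) - F(0, 0, c + h).
   Differentiating in h at h = 0+ and using F(0, 0, e) = e g_l(1) yields
   g_j(0) = g_l(c / (a + c)) + g_j(0) - g_l(1), so g_l is constant on ]0, 1].
   Then F(0, h, 1) = h g_j(1) + g_l(1), and its right derivative at h = 0 is
   g_j(0), hence g_j(0) = g_j(1). *)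

From Pilot Require Import Defs.
From HB Require Import structures.
From mathcomp Require Import all_boot all_order all_algebra.
From mathcomp Require Import all_classical all_reals all_analysis.
From mathcomp Require Import ring lra.
Import Order.TTheory GRing.Theory Num.Theory.
Import numFieldNormedType.Exports.
Local Open Scope classical_set_scope.
Local Open Scope ring_scope.

Set Implicit Arguments. Unset Strict Implicit.

Section RealFunctions.
Variable R : realType.

Lemma is_derive_dquot (f : R -> R) (t l : R) :
  (f (t + h) - f t) / h @[h --> (0 : R)^'] --> l -> is_derive t 1 f l.
Proof.
move=> fl.
have dquotE : (fun h : R => h^-1 *: ((f \o shift t) (h *: 1) - f t)) =
              (fun h => (f (t + h) - f t) / h).
  by apply: funext => h; rewrite /= [_%:A]mulr1 (addrC h t) [_ *: _]mulrC.
split; first by rewrite /derivable dquotE; exact: cvgP fl.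
by rewrite /derive dquotE; exact: (cvg_lim (@Rhausdorff R) fl).
Qed.

Lemma right_continuous_dquot (f : R -> R) (l : R) :
  (f h - f 0) / h @[h --> (0 : R)^'+] --> l -> f x @[x --> (0 : R)^'+] --> f 0.
Proof.
move=> fl.
have lim : f 0 + t * ((f t - f 0) / t) @[t --> (0 : R)^'+] --> f 0 + 0 * l.
  apply: cvgD; first exact: cvg_cst.
  by apply: cvgM => //; apply: cvg_at_right_filter; exact: cvg_id.
rewrite mul0r addr0 in lim; apply: cvg_trans _ lim. apply: near_eq_cvg.
near=> t; have t0 : 0 < t by near: t; exact: nbhs_right_gt.
by rewrite mulrC divfK ?gt_eqF // addrC subrK.
Unshelve. all: by end_near.
Qed.

Lemma derive0_eq_at0 (u : R -> R) (a : R) : 0 < a ->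
  (forall x : R, 0 < x -> is_derive x 1 u 0) -> u @ (0 : R)^'+ --> u 0 -> u a = u 0.
Proof.
move=> a0 du u0.
have du_in (x : R) : x \in `]0, a[%R -> is_derive x 1 u 0.
  by rewrite in_itv /= => /andP[x0 _]; exact: du.
have derivable_u (x : R) : 0 < x -> derivable u x 1.
  by move=> x0; have := du x x0; case.
have cont : {within `[0, a], continuous u}.
  apply: derivable_oo_LRcontinuous_within; split => //.
  - by move=> x; rewrite in_itv /= => /andP[x0 _]; exact: derivable_u.
  - apply: cvg_at_left_filter; apply: differentiable_continuous.
    by rewrite -derivable1_diffP; exact: derivable_u.
have [x _] := MVT a0 du_in cont.
by rewrite mul0r => /eqP; rewrite subr_eq0 => /eqP.
Qed.

End RealFunctions.

Section Domain.
Variables (R : realType) (K : nat).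
Implicit Types (p : 'I_K -> R) (k : 'I_K) (h : R).

Lemma dom_shift_ge0 p k h : dom p -> 0 <= h -> dom (Defs.shift p k h).
Proof.
move=> [p0 pn0] h0; split.
  by move=> m; rewrite /Defs.shift; case: ifP => _; rewrite ?addr_ge0.
move=> e; apply: pn0; apply: funext => m.
have := congr1 (fun q => q m) e; rewrite /Defs.shift.
case: eqP => [->|_] //= pkh.
by apply/eqP; rewrite eq_le p0 andbT -pkh lerDl.
Qed.

Lemma dom_shift_small p k h : dom p -> `|h| < p k -> dom (Defs.shift p k h).
Proof.
have := ler_norm (- h); rewrite normrN => nh [p0 _] hp; split.
  by move=> m; rewrite /Defs.shift; case: eqP => [->|_] //=; lra.
by move=> e; have := congr1 (fun q => q k) e; rewrite /Defs.shift eqxx /=; lra.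
Qed.

Lemma pnorm1_gt0 p : dom p -> 0 < pnorm1 p.
Proof.
move=> [p0 pn0]; rewrite lt_def sumr_ge0 // andbT.
apply/negP => /eqP p_eq0; apply: pn0; apply: funext => k.
exact: (psumr_eq0P (fun k _ => p0 k) p_eq0).
Qed.

Lemma ratio_in01 p k : dom p -> 0 <= p k / pnorm1 p <= 1.
Proof.
move=> dp; have [p0 _] := dp; have p_gt0 := pnorm1_gt0 dp.
rewrite divr_ge0 ?(ltW p_gt0) //= ler_pdivrMr // mul1r /pnorm1 (bigD1 k) //= lerDl.
exact: sumr_ge0.
Qed.

Lemma within_dom_shift_at_right p k : dom p ->
  (0 : R)^'+ `=>` within (fun h => dom (Defs.shift p k h)) (0 : R)^'.
Proof.
move=> dp P /= P_near.
have {}P_near : \forall x \near (0 : R), x != 0 -> dom (Defs.shift p k x) -> P x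
  := P_near.
apply: filterS P_near => x Px x0; apply: Px; first by rewrite gt_eqF.
by apply: dom_shift_ge0 => //; rewrite ltW.
Qed.

Lemma has_partial_at_right (F : ('I_K -> R) -> R) p k l :
  dom p -> has_partial F p k l ->
  (F (Defs.shift p k h) - F p) / h @[h --> (0 : R)^'+] --> l.
Proof.
by move=> dp; apply: cvg_trans; apply: cvg_app; exact: within_dom_shift_at_right.
Qed.

Lemma has_partial_dnbhs (F : ('I_K -> R) -> R) p k l :
  dom p -> 0 < p k -> has_partial F p k l ->
  (F (Defs.shift p k h) - F p) / h @[h --> (0 : R)^'] --> l.
Proof.
move=> dp pk; apply: cvg_trans; apply: cvg_app => P P_near.
have {}P_near : \forall x \near (0 : R)^', dom (Defs.shift p k x) -> P x := P_near.
have dom_near : \forall x \near (0 : R)^', dom (Defs.shift p k x).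
  apply: nbhs_dnbhs; apply: filterS (nbhs0_lt pk) => x.
  exact: dom_shift_small.
by apply: filter_app dom_near; apply: filterS P_near => x.
Qed.

End Domain.

Section ThreeCoordinates.
Variables (R : realType) (K : nat) (i j l : 'I_K).
Hypotheses (ij : i != j) (il : i != l) (jl : j != l).
Implicit Types a b c h : R.

Definition vec3 (a b c : R) : 'I_K -> R :=
  fun m => if m == i then a else if m == j then b else if m == l then c else 0.

Let ji : (j == i) = false. Proof. by rewrite eq_sym (negbTE ij). Qed.
Let li : (l == i) = false. Proof. by rewrite eq_sym (negbTE il). Qed.
Let lj : (l == j) = false. Proof. by rewrite eq_sym (negbTE jl). Qed.

Lemma vec3_i a b c : vec3 a b c i = a.
Proof. by rewrite /vec3 eqxx. Qed.

Lemma vec3_j a b c : vec3 a b c j = b.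
Proof. by rewrite /vec3 ji eqxx. Qed.

Lemma vec3_l a b c : vec3 a b c l = c.
Proof. by rewrite /vec3 li lj eqxx. Qed.

Lemma vec3_out a b c m : m != i -> m != j -> m != l -> vec3 a b c m = 0.
Proof. by rewrite /vec3 => /negbTE-> /negbTE-> /negbTE->. Qed.

Lemma sum_vec3_mul a b c (w : 'I_K -> R) :
  \sum_(m < K) vec3 a b c m * w m = a * w i + b * w j + c * w l.
Proof.
rewrite (bigD1 i) //= (bigD1 j) 1?eq_sym //= (bigD1 l) /=; last first.
  by rewrite [l == i]eq_sym [l == j]eq_sym il jl.
rewrite big1 ?addr0 ?vec3_i ?vec3_j ?vec3_l ?addrA // => m /andP[/andP[mi mj] ml].
by rewrite vec3_out ?mul0r.
Qed.

Lemma pnorm1_vec3 a b c : pnorm1 (vec3 a b c) = a + b + c.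
Proof.
have := sum_vec3_mul a b c (fun _ => 1); rewrite !mulr1 => <-.
by under eq_bigr do rewrite mulr1.
Qed.

Lemma dom_vec3 a b c :
  0 <= a -> 0 <= b -> 0 <= c -> 0 < a + b + c -> dom (vec3 a b c).
Proof.
move=> a0 b0 c0 abc; split.
  by move=> m; rewrite /vec3; do 3 (case: ifP => _ //).
move=> e; have := congr1 (fun q => q i) e; have := congr1 (fun q => q j) e.
by have := congr1 (fun q => q l) e; rewrite /= vec3_i vec3_j vec3_l; lra.
Qed.

Lemma shift_vec3_i a b c h : Defs.shift (vec3 a b c) i h = vec3 (a + h) b c.
Proof. by apply: funext => m; rewrite /Defs.shift /vec3; case: (m == i). Qed.

Lemma shift_vec3_j a b c h : Defs.shift (vec3 a b c) j h = vec3 a (b + h) c.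
Proof.
apply: funext => m; rewrite /Defs.shift /vec3.
by case: (eqVneq m j) => [->|_]; rewrite ?ji.
Qed.

Lemma shift_vec3_l a b c h : Defs.shift (vec3 a b c) l h = vec3 a b (c + h).
Proof.
apply: funext => m; rewrite /Defs.shift /vec3.
by case: (eqVneq m l) => [->|_]; rewrite ?li ?lj.
Qed.

End ThreeCoordinates.

Unset Implicit Arguments.

(* [Lsame D loss A] is [weighted_sum (fk D loss A)] by conversion. *)
Definition weighted_sum {R : pzSemiRingType} {K : nat}
    (f : 'I_K -> ('I_K -> R) -> R) (p : 'I_K -> R) : R :=
  \sum_(k < K) p k * f k p.

Section Conservation.
Context {R : realType} {K : nat} {f : 'I_K -> ('I_K -> R) -> R} {g : 'I_K -> R -> R}.
Hypothesis f_ratio : forall k p, dom p -> f k p = g k (p k / pnorm1 p).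
Local Notation F := (weighted_sum f).

Lemma conservation_of_const :
  (forall k, exists c : R, forall x : R, 0 <= x <= 1 -> g k x = c) ->
  forall p, dom p -> forall k, has_partial F p k (f k p).
Proof.
move=> g_const.
have f_cst m q : dom q -> f m q = g m 1.
  move=> dq; rewrite f_ratio //; have [c gc] := g_const m.
  by rewrite !gc ?ratio_in01 // ler01 lexx.
have F_lin q : dom q -> F q = \sum_(m < K) q m * g m 1.
  by move=> dq; apply: eq_bigr => m _; rewrite f_cst.
move=> p dp k; rewrite /has_partial f_cst //.
have lim_cst : (fun=> g k 1) @ within (fun h => dom (Defs.shift p k h)) (0 : R)^'
    --> g k 1 by apply: cvg_cst.
apply: cvg_trans _ lim_cst; apply: near_eq_cvg.
have dquot_cst : \forall h \near (0 : R), h != 0 -> dom (Defs.shift p k h) ->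
    g k 1 = (F (Defs.shift p k h) - F p) / h.
  apply: filterE => h h0 dh.
  rewrite !F_lin // -sumrB (bigD1 k) //= big1 ?addr0.
    by rewrite /Defs.shift eqxx; field.
  by move=> m /negbTE mk; rewrite /Defs.shift mk subrr.
exact: dquot_cst.
Qed.

Hypothesis f_grad : forall p, dom p -> forall k, has_partial F p k (f k p).

Section Triple.
Context {i j l : 'I_K}.
Hypotheses (ij : i != j) (il : i != l) (jl : j != l).
Local Notation v := (vec3 i j l).
Implicit Types a b c e h t : R.

Lemma weighted_sum_vec3 a b c :
  F (v a b c) = a * f i (v a b c) + b * f j (v a b c) + c * f l (v a b c).
Proof. exact: sum_vec3_mul. Qed.

Lemma f_vec3 m {a b c} : dom (v a b c) ->
  f m (v a b c) = g m (v a b c m / (a + b + c)).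
Proof. by move=> dv; rewrite f_ratio // pnorm1_vec3. Qed.

Lemma is_derive_vec3_i {b c t} : 0 < t -> dom (v t b c) ->
  is_derive t 1 (fun t => F (v t b c)) (f i (v t b c)).
Proof.
move=> t0 dv; have vi : 0 < v t b c i by rewrite vec3_i.
apply: is_derive_dquot.
have := has_partial_dnbhs dv vi (f_grad _ dv i).
by under eq_fun do rewrite shift_vec3_i.
Qed.

Lemma dquot_vec3_i_at0 {b c} : dom (v 0 b c) ->
  (F (v t b c) - F (v 0 b c)) / t @[t --> (0 : R)^'+] --> f i (v 0 b c).
Proof.
move=> dv; have := has_partial_at_right dv (f_grad _ dv i).
by under eq_fun do rewrite shift_vec3_i add0r.
Qed.

Lemma transfer_invariant a h c : 0 < a -> 0 < h -> 0 < c ->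
  F (v a h c) - F (v a 0 (c + h)) = F (v 0 h c) - F (v 0 0 (c + h)).
Proof.
move=> a0 h0 c0.
pose u t := F (v t h c) - F (v t 0 (c + h)).
suff : u a = u 0 by rewrite /u; lra.
apply: derive0_eq_at0 => // [x x0|].
  have dxhc : dom (v x h c) by apply: dom_vec3 => //; lra.
  have dx0ch : dom (v x 0 (c + h)) by apply: dom_vec3 => //; lra.
  have -> : 0 = f i (v x h c) - f i (v x 0 (c + h)).
    by rewrite (f_vec3 _ dxhc) (f_vec3 _ dx0ch) !vec3_i addr0 -addrA [h + c]addrC subrr.
  exact: is_deriveB (is_derive_vec3_i x0 dxhc) (is_derive_vec3_i x0 dx0ch).
have d0hc : dom (v 0 h c) by apply: dom_vec3 => //; lra.
have d00ch : dom (v 0 0 (c + h)) by apply: dom_vec3 => //; lra.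
have lim := cvgB (dquot_vec3_i_at0 d0hc) (dquot_vec3_i_at0 d00ch).
apply: (@right_continuous_dquot R u (f i (v 0 h c) - f i (v 0 0 (c + h)))).
suff -> : (fun t => (u t - u 0) / t) = (fun t =>
    (F (v t h c) - F (v 0 h c)) / t - (F (v t 0 (c + h)) - F (v 0 0 (c + h))) / t)
  by exact: lim.
by apply: funext => t; rewrite /u; ring.
Qed.

Lemma weighted_sum_vec3_l e : 0 < e -> F (v 0 0 e) = e * g l 1.
Proof.
move=> e0; have d00e : dom (v 0 0 e) by apply: dom_vec3 => //; lra.
have fl : f l (v 0 0 e) = g l 1.
  by rewrite (f_vec3 _ d00e) vec3_l // !add0r divff // gt_eqF.
by rewrite weighted_sum_vec3 fl !mul0r !add0r.
Qed.

Lemma g_ratio_eq_g1 a c : 0 < a -> 0 < c -> g l (c / (a + c)) = g l 1.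
Proof.
move=> a0 c0.
have dac : dom (v a 0 c) by apply: dom_vec3 => //; lra.
have d0c : dom (v 0 0 c) by apply: dom_vec3 => //; lra.
have dj_ac := has_partial_at_right dac (f_grad _ dac j).
have dl_ac := has_partial_at_right dac (f_grad _ dac l).
have dj_0c := has_partial_at_right d0c (f_grad _ d0c j).
rewrite (f_vec3 _ dac) vec3_j // mul0r in dj_ac.
rewrite (f_vec3 _ dac) vec3_l // addr0 in dl_ac.
rewrite (f_vec3 _ d0c) vec3_j // mul0r in dj_0c.
have split_dquot : \forall h \near (0 : R)^'+,
    (F (Defs.shift (v a 0 c) l h) - F (v a 0 c)) / h +
    (F (Defs.shift (v 0 0 c) j h) - F (v 0 0 c)) / h - g l 1 =
    (F (Defs.shift (v a 0 c) j h) - F (v a 0 c)) / h.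
  near=> h; have h0 : 0 < h by near: h; exact: nbhs_right_gt.
  rewrite !shift_vec3_j // shift_vec3_l // !add0r weighted_sum_vec3_l //.
  have := transfer_invariant a h c a0 h0 c0.
  rewrite weighted_sum_vec3_l; last by lra.
  move=> transfer.
  have -> : F (v a h c) = F (v a 0 (c + h)) + F (v 0 h c) - (c + h) * g l 1 by lra.
  by field; rewrite gt_eqF.
have lim : (F (Defs.shift (v a 0 c) j h) - F (v a 0 c)) / h @[h --> (0 : R)^'+]
    --> g l (c / (a + c)) + g j 0 - g l 1.
  exact: cvg_trans (near_eq_cvg split_dquot) (cvgB (cvgD dl_ac dj_0c) (cvg_cst _)).
have := cvg_lim (@Rhausdorff R) dj_ac; rewrite (cvg_lim (@Rhausdorff R) lim).
by move/(_ (at_right_proper_filter _)); lra.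
Unshelve. all: by end_near.
Qed.

End Triple.

Lemma exists_two_others (hK : (3 <= K)%N) (k : 'I_K) :
  exists i j : 'I_K, [/\ i != j, i != k & j != k].
Proof.
have K0 : (0 < K)%N by apply: leq_trans hK.
have K1 : (1 < K)%N by apply: leq_trans hK.
pose o0 := Ordinal K0; pose o1 := Ordinal K1; pose o2 := Ordinal hK.
have [->|n0] := eqVneq k o0; first by exists o1, o2.
have [->|n1] := eqVneq k o1; first by exists o0, o2.
by exists o0, o1; rewrite !(eq_sym _ k).
Qed.

Lemma ratio_in_open01 (x y : R) : 0 < x -> 0 < y -> 0 < x / (x + y) < 1.
Proof. by move=> x0 y0; rewrite divr_gt0 ?ltr_pdivrMr ?mul1r ?addr_gt0 //= ltrDl. Qed.

Lemma g_itvoo_eq_g1 (hK : (3 <= K)%N) l y : 0 < y < 1 -> g l y = g l 1.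
Proof.
move=> /andP[y0 y1]; have [i [j [ij il jl]]] := exists_two_others hK l.
have y'0 : 0 < 1 - y by lra.
have := g_ratio_eq_g1 ij il jl (1 - y) y y'0 y0.
by rewrite subrK divr1.
Qed.

Lemma g0_eq_g1 (hK : (3 <= K)%N) j : g j 0 = g j 1.
Proof.
have [i [l [il ij lj]]] := exists_two_others hK j.
have jl : j != l by rewrite eq_sym.
have d001 : dom (vec3 i j l 0 0 (1 : R)) by apply: dom_vec3 => //; lra.
have dj := has_partial_at_right d001 (f_grad _ d001 j).
rewrite (f_vec3 ij il jl j d001) vec3_j // mul0r in dj.
suff dquot_cst : \forall h \near (0 : R)^'+,
    g j 1 = (F (Defs.shift (vec3 i j l 0 0 1) j h) - F (vec3 i j l 0 0 1)) / h.
  have lim : (F (Defs.shift (vec3 i j l 0 0 1) j h) - F (vec3 i j l 0 0 1)) / h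
      @[h --> (0 : R)^'+] --> g j 1.
    exact: cvg_trans (near_eq_cvg dquot_cst) (cvg_cst _).
  have := cvg_lim (@Rhausdorff R) dj; rewrite (cvg_lim (@Rhausdorff R) lim).
  by move/(_ (at_right_proper_filter _)).
near=> h; have h0 : 0 < h by near: h; exact: nbhs_right_gt.
have d0h1 : dom (vec3 i j l 0 h 1) by apply: dom_vec3 => //; lra.
have gj : g j (h / (h + 1)) = g j 1 by apply/g_itvoo_eq_g1/ratio_in_open01.
have gl : g l (1 / (1 + h)) = g l 1 by apply/g_itvoo_eq_g1/ratio_in_open01.
rewrite shift_vec3_j // add0r (weighted_sum_vec3_l ij il jl 1 ltr01).
rewrite weighted_sum_vec3 // (f_vec3 ij il jl j d0h1) (f_vec3 ij il jl l d0h1).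
rewrite vec3_j // vec3_l // !add0r mul0r add0r mul1r gj (addrC h 1) gl.
by field; rewrite gt_eqF.
Unshelve. all: by end_near.
Qed.

Lemma const_of_conservation (hK : (3 <= K)%N) k :
  exists c : R, forall x : R, 0 <= x <= 1 -> g k x = c.
Proof.
exists (g k 1) => x /andP[x0 x1].
have [->|xn0] := eqVneq x 0; first exact: g0_eq_g1.
have [->|xn1] := eqVneq x 1; first by [].
by apply: (g_itvoo_eq_g1 hK); rewrite !lt_neqAle eq_sym xn0 xn1 x0 x1.
Qed.

End Conservation.

Theorem lemma7p3 (R : realType) (d : measure_display) (Z : measurableType d)
  (H : Type) (K N : nat) (D : 'I_K -> probability Z R)
  (loss : H -> Z -> R) (A : N.-tuple Z -> H) (g : 'I_K -> R -> R) :
  (3 <= K)%N -> (1 <= N)%N ->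
  (forall (k : 'I_K) (p : 'I_K -> R), dom p ->
     fk D loss A k p = g k (p k / pnorm1 p)) ->
  (conservation D loss A <->
   forall k : 'I_K, exists c : R, forall x : R, 0 <= x <= 1 -> g k x = c).
Proof.
move=> hK _ f_ratio; split.
- by move=> grad k; exact: (const_of_conservation f_ratio grad hK).
- exact: (conservation_of_const f_ratio).
Qed.
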